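(* Let $Y$ be a non-negative random variable. Let $p:[t_{1}, \infty) \to [0, \infty)$ be a non-decreasing function such that $0 < p(2t) \leq b\, p(t)$ for all $t \geq t_{1}$ and $\lim_{t \to \infty} p(t) \mathbb{P}(Y > t) = 0$, where $b > 1$ and $t_{1} > 0$ are constants. Let $h:[t_{2}, \infty) \to [0, \infty)$ be a non-decreasing function with $\lim_{t \to \infty} h(t) = \infty$ and $\lim_{t \to \infty} h(t+1)/h(t) = 1$, where $t_{2} > 0$ is a constant. Then \[ \limsup_{n \to \infty} \frac{\log (p(n) \mathbb{P}(Y > n))}{h(n)} = \limsup_{t \to \infty} \frac{\log (p(t) \mathbb{P}(Y > t))}{h(t)} \quad\text{and}\quad \liminf_{n \to \infty} \frac{\log (p(n) \mathbb{P}(Y > n))}{h(n)} = \liminf_{t \to \infty} \frac{\log (p(t) \mathbb{P}(Y > t))}{h(t)}, \] where $n$ ranges over integers and $t$ over reals.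
   Context: $\log$ is the natural logarithm with $\log 0=-\infty$. *)

From HB Require Import structures.
From mathcomp Require Import all_boot all_order all_algebra.
From mathcomp Require Import all_classical all_reals all_analysis.
Set Implicit Arguments. Unset Strict Implicit. Unset Printing Implicit Defensive.
Import Order.TTheory GRing.Theory Num.Theory.
Import numFieldNormedType.Exports.
Local Open Scope classical_set_scope.
Local Open Scope ring_scope.

(* The function t |-> log (p(t) P(Y > t)) / h(t), valued in \bar R,
   with log 0 = -oo (lne). *)
Definition tail_ratio (R : realType) (d : measure_display) (T : measurableType d)
  (P : probability T R) (Y : T -> R) (p h : R -> R) (t : R) : \bar R :=
  (lne ((p t)%:E * P [set x | (t < Y x)%R]) * ((h t)^-1)%:E)%E.

From HB Require Import structures.
From mathcomp Require Import all_boot all_order all_algebra.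
From mathcomp Require Import all_classical all_reals all_analysis.
From mathcomp Require Import lra.
Import Order.TTheory GRing.Theory Num.Theory.
Import numFieldNormedType.Exports.
Set Implicit Arguments.
Unset Strict Implicit.
Local Open Scope classical_set_scope.
Local Open Scope ring_scope.

(* Write f(t) = p(t) P(Y > t). Doubling and monotonicity of p give
   f(t) <= b f(n) and f(n + 1) <= b f(t) for n <= t <= n + 1, and f -> 0
   makes the logarithms eventually non-positive. Hence log f(t) / h(t) is
   bounded above by (log f(n) + log b) / h(n + 1) and below by
   (log f(n + 1) - log b) / h(n); since h -> oo and h(n + 1) / h(n) -> 1,
   these bounds do not move the limsup or the liminf of log f(n) / h(n). *)

Section ereal_between.
Variable R : realType.
Local Open Scope ereal_scope.

Lemma lte_fin_between (x y : \bar R) : x < y -> exists M : R, x < M%:E < y.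
Proof.
case: x y => [r| |] [s| |] //= xy.
- by exists ((r + s) / 2)%R; rewrite !lte_fin !midf_lt// -lte_fin.
- by exists (r + 1)%R; rewrite ltry lte_fin ltrDl ltr01.
- by exists (s - 1)%R; rewrite ltNyr lte_fin ltrBlDr ltrDl ltr01.
- by exists 0%R; rewrite ltNyr ltry.
Qed.

End ereal_between.

Section limf_esup_bounds.
Variables (T : choiceType) (X : filteredType T) (R : realType).
Implicit Types (f : X -> \bar R) (F : set_system X).
Local Open Scope ereal_scope.

Lemma limf_esup_le f F (L : \bar R) :
  (forall M : R, L < M%:E -> \forall x \near F, f x <= M%:E) ->
  limf_esup f F <= L.
Proof.
move=> fM; rewrite leNgt; apply/negP => /lte_fin_between[M /andP[/fM FM]].
apply/negP; rewrite -leNgt.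
apply: (@le_trans _ _ (ereal_sup (f @` [set x | f x <= M%:E]))).
  by apply: ereal_inf_lbound; exists [set x | f x <= M%:E].
by apply: ge_ereal_sup => _ [x fxM <-].
Qed.

Lemma limf_esup_lt f F {FF : Filter F} (M : R) :
  limf_esup f F < M%:E -> \forall x \near F, f x < M%:E.
Proof.
move=> /ereal_inf_lt[_ [V FV <-] VM]; apply: filterS FV => x Vx.
by apply: le_lt_trans VM; apply: ereal_sup_ubound; exists x.
Qed.

End limf_esup_bounds.

Section limf_esup_compare.
Variables (T1 T2 : choiceType) (X1 : filteredType T1) (X2 : filteredType T2).
Variables (R : realType) (F1 : set_system X1) (F2 : set_system X2).
Context {FF1 : Filter F1} {FF2 : Filter F2}.
Local Open Scope ereal_scope.

Lemma limf_esup_comp_le (g : X2 -> \bar R) (k : X1 -> X2) :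
  k @ F1 --> F2 -> limf_esup (g \o k) F1 <= limf_esup g F2.
Proof.
move=> kF; apply: limf_esup_le => M /(limf_esup_lt (FF := FF2)) gM.
have kgM : F1 [set x | g (k x) < M%:E] := kF _ gM.
by apply: filterS kgM => x /ltW.
Qed.

Lemma limf_einf_comp_ge (g : X2 -> \bar R) (k : X1 -> X2) :
  k @ F1 --> F2 -> limf_einf g F2 <= limf_einf (g \o k) F1.
Proof.
move=> kF; rewrite leeN2.
by have := limf_esup_comp_le (\- g) kF.
Qed.

Lemma limf_esup_le_limf_esup (f : X1 -> \bar R) (g : X2 -> \bar R) :
  (forall M' M : R, (M' < M)%R -> (\forall x \near F1, f x < M'%:E) ->
     \forall y \near F2, g y <= M%:E) ->
  limf_esup g F2 <= limf_esup f F1.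
Proof.
move=> fg; apply: limf_esup_le => M /lte_fin_between[M' /andP[fM' M'M]].
by apply: (fg M'); [rewrite -lte_fin | exact: limf_esup_lt].
Qed.

Lemma limf_einf_le_limf_einf (f : X1 -> \bar R) (g : X2 -> \bar R) :
  (forall m m' : R, (m < m')%R -> (\forall x \near F1, m'%:E < f x) ->
     \forall y \near F2, m%:E <= g y) ->
  limf_einf f F1 <= limf_einf g F2.
Proof.
move=> fg; rewrite leeN2; apply: limf_esup_le_limf_esup => M' M M'M fM'.
have : \forall x \near F1, (- M')%:E < f x
  by apply: filterS fM' => x; rewrite lteNl.
move/(fg (- M)%R); rewrite ltrN2 => /(_ M'M).
by apply: filterS => y; rewrite leeNl.
Qed.

End limf_esup_compare.

Lemma near_pinfty_floor (R : realType) (P : R -> Prop) (Q : nat -> Prop) :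
  (\forall s \near +oo, P s) -> (\forall n \near \oo, Q n) ->
  \forall t \near +oo,
    exists n : nat, [/\ (n%:R : R) <= t <= n%:R + 1, P n%:R, Q n & Q n.+1].
Proof.
move=> [A [Ar AP]] [N _ NQ].
exists (Num.max (A + 1) N%:R); split; first by rewrite num_real.
move=> t; rewrite gt_max => /andP[At Nt].
have /andP[nt tn] := truncn_itv (le_trans (ler0n _ N) (ltW Nt)).
rewrite -natr1 in tn.
have Nn : (N <= Num.truncn t)%N.
  by rewrite -ltnS -(ltr_nat R) -natr1 (lt_trans Nt).
exists (Num.truncn t); split; [by rewrite nt ltW | | exact: NQ | exact/NQ/leqW].
by apply: AP; rewrite -(ltrD2r 1); exact: lt_trans At tn.
Qed.

Definition log_ratio (R : realType) (f h : R -> R) (t : R) : \bar R :=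
  (lne (f t)%:E * ((h t)^-1)%:E)%E.

Section log_ratio_step.
Variables (R : realType) (f h : R -> R) (b t0 t2 : R).
Hypotheses (b_gt0 : 0 < b)
  (f_doubling : forall s t, t0 <= t -> t <= s -> s <= 2 * t -> f s <= b * f t)
  (h_mono : forall s t, t2 <= s -> s <= t -> h s <= h t).
Variables (n t : R).
Hypotheses (t0n : t0 <= n) (n_ge1 : 1 <= n) (t2n : t2 <= n) (hn_gt0 : 0 < h n)
  (bfn_lt1 : b * f n < 1) (nt : n <= t) (tn : t <= n + 1).

Let f_le_floor : f t <= b * f n.
Proof.
by apply: f_doubling => //; rewrite mulr_natl mulr2n (le_trans tn) ?lerD2l.
Qed.

Let f_succ_le : f (n + 1) <= b * f t.
Proof.
apply: f_doubling => //; first exact: le_trans nt.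
by rewrite mulr_natl mulr2n lerD // (le_trans n_ge1).
Qed.

Let ln_f_le0 : 0 < f t -> ln (f t) <= 0.
Proof. by move=> ft_gt0; apply/ln_le0/ltW/(le_lt_trans f_le_floor). Qed.

Let h_le_t : h n <= h t. Proof. exact: h_mono. Qed.

Let h_le_succ : h t <= h (n + 1). Proof. exact/h_mono/tn/(le_trans t2n). Qed.

Let ht_gt0 : 0 < h t. Proof. exact: lt_le_trans h_le_t. Qed.

Let h_succ_gt0 : 0 < h (n + 1). Proof. exact: lt_le_trans h_le_succ. Qed.

Lemma log_ratio_le_succ (M' : R) : (log_ratio f h n < M'%:E)%E ->
  (log_ratio f h t <= ((ln b + M' * h n) / h (n + 1))%:E)%E.
Proof.
rewrite /log_ratio; have [ft_le0|ft_gt0] := leP (f t) 0.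
  move=> _; rewrite le0_lneNy ?lee_fin //.
  by rewrite gt0_mulNye ?lte_fin ?invr_gt0 // leNye.
have fn_gt0 : 0 < f n.
  by rewrite -(pmulr_rgt0 _ b_gt0); exact: lt_le_trans f_le_floor.
rewrite !lne_EFin // -!EFinM lte_fin lee_fin ltr_pdivrMr // => lnfn_lt.
have lnft_le : ln (f t) <= ln b + ln (f n).
  by rewrite -lnM ?posrE // ler_ln ?posrE // mulr_gt0.
have lnbfn_le0 : ln b + ln (f n) <= 0 by rewrite -lnM ?posrE // ln_le0 // ltW.
apply: (@le_trans _ _ ((ln b + ln (f n)) / h (n + 1))).
  apply: le_trans (ler_wpM2r _ lnft_le) _; first by rewrite invr_ge0 ltW.
  by apply: (ler_wnM2l lnbfn_le0); rewrite lef_pV2 ?posrE.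
by apply: ler_wpM2r; [rewrite invr_ge0 ltW | rewrite lerD2l ltW].
Qed.

Lemma log_ratio_ge_floor (m' : R) : (m'%:E < log_ratio f h (n + 1))%E ->
  (((m' * h (n + 1) - ln b) / h n)%:E <= log_ratio f h t)%E.
Proof.
rewrite /log_ratio; have [fn1_le0|fn1_gt0] := leP (f (n + 1)) 0.
  rewrite le0_lneNy ?lee_fin //.
  by rewrite gt0_mulNye ?lte_fin ?invr_gt0 // ltNge leNye.
have ft_gt0 : 0 < f t.
  by rewrite -(pmulr_rgt0 _ b_gt0); exact: lt_le_trans f_succ_le.
rewrite !lne_EFin // -!EFinM lte_fin lee_fin ltr_pdivlMr // => lnfn1_gt.
have lnfn1_le : ln (f (n + 1)) <= ln b + ln (f t).
  by rewrite -lnM ?posrE // ler_ln ?posrE // mulr_gt0.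
apply: (@le_trans _ _ (ln (f t) / h n)).
  by apply: ler_wpM2r; [rewrite invr_ge0 ltW | lra].
by apply: (ler_wnM2l (ln_f_le0 ft_gt0)); rewrite lef_pV2 ?posrE.
Qed.

End log_ratio_step.

Section log_ratio_limits.
Variables (R : realType) (f h : R -> R) (b t0 t2 : R).
Hypotheses (b_gt0 : 0 < b)
  (f_doubling : forall s t, t0 <= t -> t <= s -> s <= 2 * t -> f s <= b * f t)
  (h_mono : forall s t, t2 <= s -> s <= t -> h s <= h t)
  (f_cvg0 : f t @[t --> +oo] --> 0)
  (h_cvgy : h t @[t --> +oo] --> +oo)
  (h_ratio : h (t + 1) / h t @[t --> +oo] --> (1 : R)).

Let step_ok s := [/\ t0 <= s, 1 <= s, t2 <= s, 0 < h s & b * f s < 1].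

Let near_h_gt0 : \forall s \near +oo, 0 < h s.
Proof. exact: (cvgryPgt _).1 h_cvgy 0. Qed.

Let near_step_ok : \forall s \near +oo, step_ok s.
Proof.
have bf_cvg0 : b * f s @[s --> +oo] --> 0.
  by rewrite -(mulr0 b); apply: cvgMr.
near=> s; split; near: s; last exact: cvgr_lt _ bf_cvg0 _ ltr01.
1-3: by apply: nbhs_pinfty_ge; rewrite num_real.
exact: near_h_gt0.
Unshelve. all: by end_near. Qed.

Let h_inv_cvg0 : (h s)^-1 @[s --> +oo] --> 0.
Proof. exact/gtr0_cvgV0. Qed.

Let upper_bound_cvg (M' : R) :
  (ln b + M' * h s) / h (s + 1) @[s --> +oo] --> M'.
Proof.
have lim : (ln b * (h s)^-1 + M') / (h (s + 1) / h s) @[s --> +oo]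
    --> (ln b * 0 + M') / 1.
  apply: cvgM; last by apply: cvgV => //; rewrite oner_neq0.
  by apply: cvgD; [apply: cvgMr | exact: cvg_cst].
rewrite mulr0 add0r divr1 in lim; apply: cvg_trans lim; apply: near_eq_cvg.
near=> s; have hs_gt0 : 0 < h s by near: s; exact: near_h_gt0.
by rewrite /= invf_div mulrA mulrDl -mulrA mulVf ?gt_eqF // mulr1.
Unshelve. all: by end_near. Qed.

Let lower_bound_cvg (m' : R) :
  (m' * h (s + 1) - ln b) / h s @[s --> +oo] --> m'.
Proof.
have lim : m' * (h (s + 1) / h s) - ln b * (h s)^-1 @[s --> +oo]
    --> m' * 1 - ln b * 0.
  by apply: cvgB; apply: cvgMr.
rewrite mulr0 mulr1 subr0 in lim; apply: cvg_trans lim; apply: near_eq_cvg.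
by near=> s; rewrite /= mulrBl mulrA.
Unshelve. all: by end_near. Qed.

Lemma log_ratio_limn_esup :
  limn_esup (fun n => log_ratio f h n%:R) = limf_esup (log_ratio f h) +oo.
Proof.
apply/le_anti/andP; split; first exact: (limf_esup_comp_le _ cvgr_idn).
apply: limf_esup_le_limf_esup => M' M M'M near_lt.
have near_bound : \forall s \near +oo,
    step_ok s /\ (ln b + M' * h s) / h (s + 1) < M.
  near=> s; split; near: s; first exact: near_step_ok.
  exact: cvgr_lt _ (@upper_bound_cvg M') _ M'M.
apply: filterS (near_pinfty_floor near_bound near_lt).
move=> t [n [/andP[nt tn] [[t0n n1 t2n hn bfn] bound] lt_n _]].
have := log_ratio_le_succ b_gt0 f_doubling h_mono t0n n1 t2n hn bfn nt tn lt_n.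
by move/le_trans; apply; rewrite lee_fin ltW.
Unshelve. all: by end_near. Qed.

Lemma log_ratio_limn_einf :
  limn_einf (fun n => log_ratio f h n%:R) = limf_einf (log_ratio f h) +oo.
Proof.
apply/le_anti/andP; split; last exact: (limf_einf_comp_ge _ cvgr_idn).
apply: limf_einf_le_limf_einf => m m' mm' near_gt.
have near_bound : \forall s \near +oo,
    step_ok s /\ m < (m' * h (s + 1) - ln b) / h s.
  near=> s; split; near: s; first exact: near_step_ok.
  exact: cvgr_gt _ (@lower_bound_cvg m') _ mm'.
apply: filterS (near_pinfty_floor near_bound near_gt).
move=> t [n [/andP[nt tn] [[t0n n1 t2n hn bfn] bound] _]].
rewrite -natr1 => gt_n1.
have := log_ratio_ge_floor b_gt0 f_doubling h_mono t0n n1 t2n hn bfn nt tn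
  gt_n1.
by apply: le_trans; rewrite lee_fin ltW.
Unshelve. all: by end_near. Qed.

End log_ratio_limits.

Lemma doubling_mul_nonincreasing (R : realType) (p q : R -> R) (b t1 : R) :
  (forall t, t1 <= t -> 0 <= p t) ->
  (forall s t, t1 <= s -> s <= t -> p s <= p t) ->
  (forall t, t1 <= t -> p (2 * t) <= b * p t) ->
  (forall t, 0 <= q t) -> (forall s t, s <= t -> q t <= q s) ->
  forall s t, t1 <= t -> t <= s -> s <= 2 * t -> p s * q s <= b * (p t * q t).
Proof.
move=> p_ge0 p_mono p_doub q_ge0 q_mono s t t1t ts st2.
rewrite mulrA; apply: ler_pM; rewrite ?q_ge0 ?q_mono ?p_ge0 //.
  exact: le_trans t1t ts.
apply: le_trans (p_doub _ t1t); apply: p_mono st2.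
exact: le_trans ts.
Qed.

Definition tail_prob (R : realType) (d : measure_display) (T : measurableType d)
  (P : probability T R) (Y : T -> R) (t : R) : R :=
  fine (P [set x | t < Y x]).

Section tail_probability.
Variables (R : realType) (d : measure_display) (T : measurableType d).
Variables (P : probability T R) (Y : T -> R).
Hypothesis mY : measurable_fun setT Y.

Let measurable_tail t : measurable [set x | t < Y x].
Proof.
by rewrite -[X in measurable X]setTI -preimage_itvoy; exact: mY.
Qed.

Lemma tail_probE t : P [set x | t < Y x] = (tail_prob P Y t)%:E.
Proof. by rewrite fineK // fin_num_measure. Qed.

Lemma tail_prob_ge0 t : 0 <= tail_prob P Y t.
Proof. exact: fine_ge0. Qed.

Lemma tail_prob_nonincreasing s t :
  s <= t -> tail_prob P Y t <= tail_prob P Y s.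
Proof.
move=> st; rewrite -lee_fin -!tail_probE; apply: le_measure; rewrite ?inE //.
by move=> x /= /(le_lt_trans st).
Qed.

End tail_probability.

Theorem lemma3p2 (R : realType) (d : measure_display) (T : measurableType d)
  (P : probability T R) (Y : T -> R) (p h : R -> R) (b t1 t2 : R)
  (mY : measurable_fun setT Y) (Y0 : forall x, 0 <= Y x)
  (b1 : 1 < b) (t1pos : 0 < t1) (t2pos : 0 < t2)
  (p_ge0 : forall t, t1 <= t -> 0 <= p t)
  (p_mono : forall s t, t1 <= s -> s <= t -> p s <= p t)
  (p_pos2 : forall t, t1 <= t -> 0 < p (2 * t))
  (p_doub : forall t, t1 <= t -> p (2 * t) <= b * p t)
  (p_tail : ((p t)%:E * P [set x | (t < Y x)%R])%E @[t --> +oo] --> 0%E)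
  (h_ge0 : forall t, t2 <= t -> 0 <= h t)
  (h_mono : forall s t, t2 <= s -> s <= t -> h s <= h t)
  (h_infty : h t @[t --> +oo] --> +oo)
  (h_ratio : h (t + 1) / h t @[t --> +oo] --> (1 : R)) :
  limn_esup (fun n : nat => tail_ratio P Y p h n%:R)
    = limf_esup (tail_ratio P Y p h) (pinfty_nbhs R)
  /\ limn_einf (fun n : nat => tail_ratio P Y p h n%:R)
    = limf_einf (tail_ratio P Y p h) (pinfty_nbhs R).
Proof.
pose f := p \* tail_prob P Y.
have -> : tail_ratio P Y p h = log_ratio f h.
  by apply/funext => t; rewrite /tail_ratio (tail_probE P mY) -EFinM.
have b_gt0 : 0 < b := lt_trans ltr01 b1.
have f_doubling : forall s t, t1 <= t -> t <= s -> s <= 2 * t -> f s <= b * f t.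
  exact: doubling_mul_nonincreasing p_ge0 p_mono p_doub
    (tail_prob_ge0 P Y) (tail_prob_nonincreasing P mY).
have f_cvg0 : f t @[t --> +oo] --> 0.
  move: p_tail; under eq_fun do rewrite (tail_probE P mY) -EFinM.
  by case/fine_cvgP.
split.
  exact: log_ratio_limn_esup b_gt0 f_doubling h_mono f_cvg0 h_infty h_ratio.
exact: log_ratio_limn_einf b_gt0 f_doubling h_mono f_cvg0 h_infty h_ratio.
Qed.
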